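(* Let \[G=\langle a,b,c,s,t\mid sas^{-1}=ab,\ sbs^{-1}=b,\ scs^{-1}=c,\ tat^{-1}=ba,\ tbt^{-1}=b,\ tct^{-1}=c\rangle.\] Then the following subsets are equationally definable in $G$: (1) $\langle b\rangle$; (2) $\langle s\rangle$; (3) $\langle t\rangle$; (4) $\{(s^i,t^i)\mid i\in\mathbb{Z}\}\subseteq G^2$; (5) $\langle s,t\rangle$.
   Context: An equation over a finitely generated group $G$ with variables from a finite set $\mathcal X$ is an element $w\in G*F(\mathcal X)$, written $w=1$; a solution is a homomorphism $\phi:G*F(\mathcal X)\to G$ that is the identity on $G$ with $\phi(w)=1$; a system of equations is a finite set of equations in the same variables, solved by a common solution. A set $D\subseteq G^n$ is equationally definable if there is a system of equations $\mathcal E$ over $G$ and variables $X_1,\dots,X_n$ of $\mathcal E$ (not necessarily all variables) such that $D=\{(\phi(X_1),\dots,\phi(X_n)) \mid \phi \text{ a solution of } \mathcal E\}$. *)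

From HB Require Import structures.
From mathcomp Require Import all_boot all_order ssralg ssrint.
Set Implicit Arguments. Unset Strict Implicit. Unset Printing Implicit Defensive.
Local Open Scope group_scope.

Definition zpow (G : groupType) (g : G) (i : int) : G :=
  match i with
  | Posz n => g ^+ n
  | Negz n => (g ^+ n.+1)^-1
  end.

Definition is_subgroup (G : groupType) (H : G -> Prop) : Prop :=
  H 1 /\ (forall x y, H x -> H y -> H (x * y)) /\ (forall x, H x -> H x^-1).
Definition gen (G : groupType) (S : G -> Prop) (x : G) : Prop :=
  forall H : G -> Prop, is_subgroup H -> (forall y, S y -> H y) -> H x.

(* Equations over G with variables indexed by nat: an element of G * F(X) is
   represented by a word whose letters are constants of G or variables X_i^{±1}. *)
Inductive letter (G : groupType) : Type :=
  | Const of G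
  | Var of nat & bool (* Var i false = X_i, Var i true = X_i^-1 *).

Definition eval_letter (G : groupType) (phi : nat -> G) (l : letter G) : G :=
  match l with
  | Const g => g
  | Var i false => phi i
  | Var i true => (phi i)^-1
  end.

(* the image of a word under the homomorphism G * F(X) -> G that is the identity
   on G and sends X_i to phi i *)
Definition eval_word (G : groupType) (phi : nat -> G) (w : seq (letter G)) : G :=
  foldr (fun l acc => eval_letter phi l * acc) 1 w.

Definition equation (G : groupType) := seq (letter G).
Definition system (G : groupType) := seq (equation G).

Definition is_solution (G : groupType) (E : system G) (phi : nat -> G) : Prop :=
  forall k, (k < size E)%N -> eval_word phi (nth [::] E k) = 1.

Definition eq_definable (G : groupType) (n : nat) (D : ('I_n -> G) -> Prop) : Prop :=
  exists (E : system G) (X : 'I_n -> nat),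
    forall v : 'I_n -> G,
      D v <-> exists phi, is_solution E phi /\ (forall k, phi (X k) = v k).

Definition eq_definable1 (G : groupType) (D : G -> Prop) : Prop :=
  eq_definable (fun v : 'I_1 -> G => D (v ord0)).
Definition eq_definable2 (G : groupType) (D : G -> G -> Prop) : Prop :=
  eq_definable (fun v : 'I_2 -> G => D (v ord0) (v ord_max)).

Definition rels (H : groupType) (a b c s t : H) : Prop :=
  s * a * s^-1 = a * b /\ s * b * s^-1 = b /\ s * c * s^-1 = c /\
  t * a * t^-1 = b * a /\ t * b * t^-1 = b /\ t * c * t^-1 = c.

Definition group_hom (G H : groupType) (f : G -> H) : Prop :=
  forall x y, f (x * y) = f x * f y.

(* G together with a,b,c,s,t is (up to isomorphism) the group given by the
   presentation: universal property of the presented group *)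
Definition presents (G : groupType) (a b c s t : G) : Prop :=
  rels a b c s t /\
  forall (H : groupType) (a' b' c' s' t' : H), rels a' b' c' s' t' ->
    exists f : G -> H,
      (group_hom f /\ f a = a' /\ f b = b' /\ f c = c' /\ f s = s' /\ f t = t') /\
      forall g : G -> H,
        (group_hom g /\ g a = a' /\ g b = b' /\ g c = c' /\ g s = s' /\ g t = t') ->
        forall x, g x = f x.

From HB Require Import structures.
From mathcomp Require Import all_boot all_order ssralg ssrint.
From mathcomp Require Import zify.
Set Implicit Arguments. Unset Strict Implicit. Unset Printing Implicit Defensive.
Local Open Scope group_scope.

(* G is the semidirect product F(a,b,c) x| F(s,t) in which s and t fix b and c
   and send a to ab and ba: the universal property of the presentation and the
   evaluation of this explicit model back into G make it a copy of G.  In a free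
   group the centraliser of a generator is the cyclic group it generates, and two
   distinct generators have trivial common centraliser.  Reading off normal forms,
   the centralisers of {b, s, t}, {s, b, c}, {t, b, c} and {b, c} are <b>, <s>,
   <t> and <s, t>, and centralisers are solution sets of the equations
   X g X^-1 g^-1 = 1.  Finally s^i a s^-i = a b^i and t^j a t^-j = b^j a, so for
   x = s^i and y = t^j the equation a^-1 (x a x^-1) = (y a y^-1) a^-1 says
   b^i = b^j, that is i = j because b has infinite order. *)

Section GroupHom.
Variables (G H : groupType) (f : G -> H).
Hypothesis f_hom : group_hom f.

Lemma group_hom1 : f 1 = 1.
Proof. by apply: (@mulgI _ (f 1)); rewrite -f_hom !mulg1. Qed.

Lemma group_homV x : f x^-1 = (f x)^-1.
Proof. by apply: (@mulgI _ (f x)); rewrite -f_hom !mulgV group_hom1. Qed.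

Lemma group_homX x n : f (x ^+ n) = f x ^+ n.
Proof. by elim: n => [|n IH]; rewrite ?group_hom1 // !expgS f_hom IH. Qed.

Lemma group_homZ x i : f (zpow x i) = zpow (f x) i.
Proof. by case: i => n /=; rewrite ?group_homV group_homX. Qed.

End GroupHom.

Section Centralisers.
Variable G : groupType.
Implicit Types (g h x y : G) (gs : seq G).

Definition centralises x gs := forall g, g \in gs -> commute x g.

Lemma centralises3 x g1 g2 g3 :
  centralises x [:: g1; g2; g3] <-> [/\ commute x g1, commute x g2 & commute x g3].
Proof.
split=> [cx | [c1 c2 c3] g]; first by split; apply: cx; rewrite !inE eqxx ?orbT.
by rewrite !inE => /or3P[]/eqP->.
Qed.

Lemma centralises_subgroup gs : is_subgroup (centralises^~ gs).
Proof.
split=> [g _|]; first exact/commute_sym/commute1.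
split=> [x y cx cy g /[dup] gs_g /cx xg | x cx g /cx xg].
  by rewrite /commute -mulgA (cy g gs_g) !mulgA xg.
by apply/commute_sym/commuteV/commute_sym.
Qed.

Lemma subgroup_zpow (P : G -> Prop) g i : is_subgroup P -> P g -> P (zpow g i).
Proof.
move=> [P1 [PM PV]] Pg; have Pn n : P (g ^+ n) by elim: n => [|n IH] //; rewrite expgS; auto.
by case: i => n /=; auto.
Qed.

Lemma gen_zpow (S : G -> Prop) g i : S g -> gen S (zpow g i).
Proof. by move=> Sg P P_sub SP; apply: subgroup_zpow P_sub (SP g Sg). Qed.

Lemma gen_centralises (S : G -> Prop) gs x :
  (forall y, S y -> centralises y gs) -> gen S x -> centralises x gs.
Proof. by move=> S_gs gen_x; apply: gen_x (centralises_subgroup gs) S_gs. Qed.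

Lemma gen_cyclic_centraliser g gs : centralises g gs ->
  (forall x, centralises x gs -> exists i, x = zpow g i) ->
  forall x, gen (fun y => y = g) x <-> centralises x gs.
Proof.
move=> g_gs cyclic x; split; first by apply: gen_centralises => y ->.
by move=> /cyclic[i ->]; apply: gen_zpow.
Qed.

Lemma zpowV g i : zpow g^-1 i = (zpow g i)^-1.
Proof. by case: i => n; rewrite /= expVgn ?invgK. Qed.

Lemma conjM g x y : g * (x * y) * g^-1 = g * x * g^-1 * (g * y * g^-1).
Proof. by rewrite !mulgA mulgVK. Qed.

Lemma conjV_eq g x y : g * x * g^-1 = y -> g^-1 * y * g^-1^-1 = x.
Proof. by move=> <-; rewrite invgK !mulgA mulVg mul1g mulgVK. Qed.

Lemma conj_commute g h : commute g h -> g * h * g^-1 = h.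
Proof. by move=> ->; rewrite mulgK. Qed.

Lemma conj_fix_commute g h : g * h * g^-1 = h -> commute g h.
Proof. by move=> ghg; rewrite /commute -{2}ghg mulgVK. Qed.

Lemma zpow_conj_mulr g x h : commute g h -> g * x * g^-1 = x * h ->
  forall i, zpow g i * x * (zpow g i)^-1 = x * zpow h i.
Proof.
move=> gh gx; have pos n : g ^+ n * x * (g ^+ n)^-1 = x * h ^+ n.
  elim: n => [|n IH]; first by rewrite mul1g invg1 !mulg1.
  have -> : g ^+ n.+1 * x * (g ^+ n.+1)^-1 = g * (g ^+ n * x * (g ^+ n)^-1) * g^-1.
    by rewrite expgS invgM !mulgA.
  by rewrite IH conjM gx (conj_commute (commuteX n gh)) expgS mulgA.
case=> [n|n] /=; first exact: pos.
have kl : commute (g ^+ n.+1)^-1 (h ^+ n.+1).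
  by apply/commute_sym/commuteV/commute_sym/commuteX2.
have := conjV_eq (pos n.+1); rewrite conjM (conj_commute kl) => def_x.
by rewrite -{2}def_x mulgK.
Qed.

Lemma zpow_conj_mull g x h : commute g h -> g * x * g^-1 = h * x ->
  forall i, zpow g i * x * (zpow g i)^-1 = zpow h i * x.
Proof.
move=> gh gx i; apply: invg_inj; rewrite !invgM invgK !mulgA -[(zpow h i)^-1]zpowV.
apply: zpow_conj_mulr i; first exact: commuteV.
by apply: invg_inj; rewrite !invgM !invgK mulgA gx.
Qed.

End Centralisers.

(* [(i, false)] stands for the generator [x_i] and [(i, true)] for its inverse. *)
Definition lit : Type := (nat * bool)%type.
Definition lit_inv (x : lit) : lit := (x.1, ~~ x.2).

Lemma lit_invK : involutive lit_inv.
Proof. by case=> i e; rewrite /lit_inv negbK. Qed.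

Lemma lit_inv_neq x : (x == lit_inv x) = false.
Proof. by case: x => i []; rewrite /lit_inv xpair_eqE eqxx. Qed.

Definition reduced : seq lit -> bool := sorted (fun x y => y != lit_inv x).

Definition lcons (x : lit) (w : seq lit) : seq lit :=
  if w is y :: w' then (if y == lit_inv x then w' else x :: w) else [:: x].

Lemma reduced_lcons x w : reduced w -> reduced (lcons x w).
Proof.
case: w => [|y w] //= red_w; case: ifP => [_|/negbT y_x]; first exact: path_sorted red_w.
by rewrite /= y_x.
Qed.

Lemma lconsK x w : reduced w -> lcons (lit_inv x) (lcons x w) = w.
Proof.
case: w => [|y w] /=; first by rewrite lit_invK eqxx.
case: ifP => [/eqP-> | _] red_w; last by rewrite /= lit_invK eqxx.
by case: w red_w => [|z w] //= /andP[/negbTE-> _].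
Qed.

Lemma lcons_reduced x w : reduced (x :: w) -> lcons x w = x :: w.
Proof. by case: w => [|y w] //= /andP[/negbTE-> _]. Qed.

Definition wmul (u v : seq lit) : seq lit := foldr lcons v u.
Definition winv (u : seq lit) : seq lit := rev (map lit_inv u).

Lemma reduced_wmul u v : reduced v -> reduced (wmul u v).
Proof. by elim: u => [|x u IH] //= red_v; apply/reduced_lcons/IH. Qed.

Lemma wmul_lcons x u v : reduced v -> wmul (lcons x u) v = lcons x (wmul u v).
Proof.
case: u => [|y u] //= red_v; case: ifP => // /eqP->.
by rewrite -{1}(lit_invK x) lconsK // reduced_wmul.
Qed.

Lemma wmulA u v w : reduced v -> reduced w -> wmul (wmul u v) w = wmul u (wmul v w).
Proof.
move=> red_v red_w; elim: u => [|x u IH] //=.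
by rewrite wmul_lcons ?IH // reduced_wmul.
Qed.

Lemma wmul_reduced p v : reduced (p ++ v) -> wmul p v = p ++ v.
Proof.
elim: p => [|x p IH] //= red_pv.
rewrite IH ?lcons_reduced //; exact: path_sorted red_pv.
Qed.

Lemma wmulw0 u : reduced u -> wmul u [::] = u.
Proof. by move=> red_u; rewrite wmul_reduced ?cats0. Qed.

Lemma wmulVw u : wmul (winv u) u = [::].
Proof.
elim: u => [|x u IH] //=.
by rewrite /winv map_cons rev_cons /wmul foldr_rcons /= lit_invK eqxx.
Qed.

Lemma winvK : involutive winv.
Proof. by move=> u; rewrite /winv map_rev revK -map_comp (eq_map lit_invK) map_id. Qed.

Lemma reduced_winv u : reduced u -> reduced (winv u).
Proof.
rewrite /reduced /winv rev_sorted sorted_map; apply: sub_sorted => x y /=.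
by apply: contra => /eqP->; rewrite lit_invK.
Qed.

Definition freeGroup : Type := {w : seq lit | reduced w}.
HB.instance Definition _ := Choice.on freeGroup.

Definition fmul (u v : freeGroup) : freeGroup :=
  exist _ (wmul (val u) (val v)) (reduced_wmul (val u) (valP v)).
Definition fone : freeGroup := exist _ [::] isT.
Definition finv (u : freeGroup) : freeGroup := exist _ (winv (val u)) (reduced_winv (valP u)).

Lemma fmulA : associative fmul.
Proof. by move=> u v w; apply: val_inj; rewrite /= wmulA // valP. Qed.
Lemma fmul1 : left_id fone fmul.
Proof. by move=> u; apply: val_inj. Qed.
Lemma fmulg1 : right_id fone fmul.
Proof. by move=> u; apply: val_inj; rewrite /= wmulw0 // valP. Qed.
Lemma fmulV : left_inverse fone finv fmul.
Proof. by move=> u; apply: val_inj; rewrite /= wmulVw. Qed.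
Lemma fmulgV : right_inverse fone finv fmul.
Proof. by move=> u; apply: val_inj; rewrite /= -{1}(winvK (val u)) wmulVw. Qed.

HB.instance Definition _ := isGroup.Build freeGroup fmulA fmul1 fmulg1 fmulV fmulgV.

Definition flit (x : lit) : freeGroup := exist _ [:: x] isT.
Definition fgen (i : nat) : freeGroup := flit (i, false).

Lemma flit_inv x : flit (lit_inv x) = (flit x)^-1.
Proof. by apply: val_inj. Qed.

Lemma val_flitM x u : val (flit x * u) = lcons x (val u).
Proof. by []. Qed.

Lemma free_ind (P : freeGroup -> Prop) :
  P 1 -> (forall x u, P u -> P (flit x * u)) -> forall u, P u.
Proof.
move=> P1 PM [w red_w]; elim: w red_w => [|x w IH] red_xw.
  by have -> : exist _ [::] red_xw = 1 :> freeGroup by apply: val_inj.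
have red_w := path_sorted red_xw.
have -> : exist _ (x :: w) red_xw = flit x * exist _ w red_w.
  by apply: val_inj; rewrite val_flitM lcons_reduced.
exact/PM/IH.
Qed.

Lemma free_hom_eq (H : groupType) (f g : freeGroup -> H) :
  group_hom f -> group_hom g -> (forall i, f (fgen i) = g (fgen i)) -> f =1 g.
Proof.
move=> f_hom g_hom fg; apply: free_ind => [|[i e] u IH]; first by rewrite !group_hom1.
rewrite f_hom g_hom IH; congr (_ * _); case: e; last exact: fg.
by rewrite -[(i, true)]/(lit_inv (i, false)) flit_inv !group_homV // fg.
Qed.

Section FreeLift.
Variables (H : groupType) (f : nat -> H).

Definition lit_eval (x : lit) : H := if x.2 then (f x.1)^-1 else f x.1.
Definition word_eval (w : seq lit) : H := foldr (fun x acc => lit_eval x * acc) 1 w.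
Definition free_lift (u : freeGroup) : H := word_eval (val u).

Lemma lit_eval_inv x : lit_eval (lit_inv x) = (lit_eval x)^-1.
Proof. by case: x => i []; rewrite /lit_eval /= ?invgK. Qed.

Lemma word_eval_lcons x w : word_eval (lcons x w) = lit_eval x * word_eval w.
Proof.
case: w => [|y w] //=; case: ifP => // /eqP->.
by rewrite lit_eval_inv mulVKg.
Qed.

Lemma free_lift_hom : group_hom free_lift.
Proof.
move=> u v; rewrite /free_lift /=.
by elim: (val u) => [|x w IH] /=; rewrite ?mul1g // word_eval_lcons IH mulgA.
Qed.

Lemma free_lift_gen i : free_lift (fgen i) = f i.
Proof. exact: mulg1. Qed.

Lemma free_lift_subgroup (P : H -> Prop) u :
  is_subgroup P -> (forall i, P (f i)) -> P (free_lift u).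
Proof.
move=> [P1 [PM PV]] Pf; rewrite /free_lift; elim: (val u) => [|[i e] w IH] //=.
by apply: PM => //; case: e; rewrite /lit_eval /=; auto.
Qed.

End FreeLift.

Lemma cons_eq_rcons (x y : lit) l : x :: l = rcons l y -> all (pred1 x) l.
Proof. by elim: l => [|z l IH] //= [<- /IH]; rewrite eqxx. Qed.

Lemma commute_lit_word x l : reduced l -> lcons x l = wmul l [:: x] ->
  all (pred1 x) l || all (pred1 (lit_inv x)) l.
Proof.
(* By length, either both sides cancel a letter or neither does; either way l
   equals its rotation by one letter. *)
case: (lastP l) => [|p y] // red_py.
have red_p : reduced p by move: red_py; rewrite /reduced -cats1 => /cat_sorted2[].
have [z [l' def_l]] : exists z l', rcons p y = z :: l'.
  by case: (p) => [|q p']; do 2!eexists.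
have size_l' : size l' = size p by move/(congr1 size): def_l; rewrite size_rcons => -[].
rewrite /wmul foldr_rcons -/(wmul p _) def_l /=.
have [x_y|y_x] := eqVneq x (lit_inv y).
  rewrite wmulw0 //; case: eqP => [z_x def_p|_ /(congr1 size)/=]; last by rewrite size_l'; lia.
  by rewrite orbC /= -z_x (cons_eq_rcons (y := y)) // -def_l def_p.
rewrite wmul_reduced; last by rewrite /reduced sorted_cat_cons -/reduced red_py /= y_x.
rewrite -cat_rcons def_l cats1.
case: eqP => [_ /(congr1 size)|_ /cons_eq_rcons/= ->//].
by rewrite size_rcons /= size_l'; lia.
Qed.

Lemma val_flitX x n : val (flit x ^+ n) = nseq n x.
Proof.
elim: n => [|n IH] //; rewrite expgS val_flitM IH.
by case: n {IH} => //= n; rewrite lit_inv_neq.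
Qed.

Lemma val_zpow_flit x i : val (zpow (flit x) i) =
  if i is Negz n then nseq n.+1 (lit_inv x) else nseq `|i|%N x.
Proof.
case: i => n /=; first exact: val_flitX.
by rewrite -[LHS]/(winv _) val_flitX /winv map_nseq rev_nseq.
Qed.

Lemma commute_flit x u : commute u (flit x) -> exists i, u = zpow (flit x) i.
Proof.
move=> /(congr1 val) comm_ux.
have /orP[] := commute_lit_word (valP u) (esym comm_ux) => /all_pred1P def_u.
  by exists (size (val u)); apply: val_inj; rewrite val_zpow_flit.
move: def_u; case: (size (val u)) => [|n] def_u; [exists 0 | exists (Negz n)].
  all: by apply: val_inj; rewrite val_zpow_flit def_u.
Qed.

Lemma zpow_flit_inj x : injective (zpow (flit x)).
Proof.
move=> i j /(congr1 val); rewrite !val_zpow_flit.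
have sign_neq n m : nseq n x = nseq m.+1 (lit_inv x) -> False.
  by move/(congr1 (all (pred1 x))); rewrite !all_nseq /= eqxx orbT eq_sym lit_inv_neq.
case: i => n; case: j => m /=.
- by move/(congr1 size); rewrite !size_nseq => ->.
- by move=> E; case: (sign_neq n m E).
- by move=> E; case: (sign_neq m n (esym E)).
- by move/(congr1 size); rewrite /= !size_nseq => -[->].
Qed.

Lemma commute_fgen2 i j u : i != j ->
  commute u (fgen i) -> commute u (fgen j) -> u = 1.
Proof.
have lit_index x k : all (fun y => y.1 == x.1) (val (zpow (flit x) k)).
  by case: k => n; rewrite val_zpow_flit all_nseq /= eqxx ?orbT.
move=> ij /commute_flit[k def_u] /commute_flit[m def_u'].
apply: val_inj; move: (lit_index (i, false) k) (lit_index (j, false) m).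
rewrite -def_u -def_u' /=; case: (val u) => [|y w] //= /andP[/eqP-> _] /andP[/eqP ij'].
by rewrite ij' eqxx in ij.
Qed.

Record gaction (N H : groupType) := GAction {
  gact :> H -> N -> N;
  gact_hom : forall h, group_hom (gact h);
  gact1 : forall n, gact 1 n = n;
  gactM : forall h k n, gact (h * k) n = gact h (gact k n)
}.

Section SemidirectProduct.
Variables (N H : groupType) (A : gaction N H).

(* The action is a phantom argument: it is what the group structure depends on. *)
Definition sdprod of gaction N H : Type := (N * H)%type.
HB.instance Definition _ := Choice.on (sdprod A).

Definition sdmul (x y : sdprod A) : sdprod A := (x.1 * A x.2 y.1, x.2 * y.2).
Definition sdone : sdprod A := (1, 1).
Definition sdinv (x : sdprod A) : sdprod A := (A x.2^-1 x.1^-1, x.2^-1).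

Lemma gact_one h : A h 1 = 1.
Proof. exact: group_hom1 (gact_hom A h). Qed.

Lemma sdmulA : associative sdmul.
Proof. by move=> [n h] [m k] [p l]; rewrite /sdmul /= gactM (gact_hom A) !mulgA. Qed.
Lemma sdmul1 : left_id sdone sdmul.
Proof. by move=> x; rewrite /sdmul /= gact1 !mul1g; case: x. Qed.
Lemma sdmulg1 : right_id sdone sdmul.
Proof. by move=> x; rewrite /sdmul /= gact_one !mulg1; case: x. Qed.
Lemma sdmulV : left_inverse sdone sdinv sdmul.
Proof. by move=> x; rewrite /sdmul /= -(gact_hom A) !mulVg gact_one. Qed.
Lemma sdmulgV : right_inverse sdone sdinv sdmul.
Proof. by move=> x; rewrite /sdmul /= -gactM mulgV gact1 mulgV. Qed.

HB.instance Definition _ := isGroup.Build (sdprod A) sdmulA sdmul1 sdmulg1 sdmulV sdmulgV.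

Lemma sdprodM (n m : N) (h k : H) : ((n, h) : sdprod A) * (m, k) = (n * A h m, h * k).
Proof. by []. Qed.

Lemma sdprod_inl_hom : group_hom (fun n : N => (n, 1) : sdprod A).
Proof. by move=> n m; rewrite sdprodM gact1 mulg1. Qed.

Lemma sdprod_conj (h : H) (n : N) :
  ((1, h) : sdprod A) * (n, 1) * ((1, h) : sdprod A)^-1 = (A h n, 1).
Proof. by rewrite [_^-1]/(sdinv _) /= !sdprodM invg1 !gact_one !mulg1 mul1g mulgV. Qed.

Lemma commute_sdprod_fixed (x : sdprod A) (m : N) :
  (forall h, A h m = m) -> commute x (m, 1) -> commute x.1 m.
Proof. by case: x => n h fix_m; rewrite /commute !sdprodM fix_m gact1 => -[]. Qed.

Lemma commute_sdprod_inr (x : sdprod A) (k : H) : commute x (1, k) -> commute x.2 k.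
Proof. by case: x => n h; rewrite /commute !sdprodM => -[]. Qed.

Lemma sdprod_lift_hom (G : groupType) (fN : N -> G) (fH : H -> G) :
  group_hom fN -> group_hom fH ->
  (forall h n, fN (A h n) = fH h * fN n * (fH h)^-1) ->
  group_hom (fun x : sdprod A => fN x.1 * fH x.2).
Proof.
move=> fN_hom fH_hom fN_act [n h] [m k]; rewrite sdprodM /= fN_hom fH_hom fN_act.
by rewrite !mulgA mulgVK.
Qed.

End SemidirectProduct.

(* In the model, generators 0, 1, 2 of the normal factor are a, b, c and
   generators 0, 1 of the acting factor are s, t; the remaining generators are
   inert (fixed by the action, sent to 1 by the evaluation into G). *)
Definition st_image (x : lit) (j : nat) : freeGroup :=
  match x, j with
  | (0, false), 0 => fgen 0 * fgen 1
  | (0, true), 0 => fgen 0 * (fgen 1)^-1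
  | (1, false), 0 => fgen 1 * fgen 0
  | (1, true), 0 => (fgen 1)^-1 * fgen 0
  | _, _ => fgen j
  end.

Definition act_lit (x : lit) : freeGroup -> freeGroup := free_lift (st_image x).

Lemma act_lit_hom x : group_hom (act_lit x).
Proof. exact: free_lift_hom. Qed.

Lemma act_litK x : cancel (act_lit (lit_inv x)) (act_lit x).
Proof.
have hom_comp : group_hom (act_lit x \o act_lit (lit_inv x)).
  by move=> u v; rewrite /= !act_lit_hom.
apply: (free_hom_eq hom_comp (g := id)) => // j; rewrite /= /act_lit free_lift_gen.
case: x {hom_comp} => [[|[|i]] []]; case: j => [|j] //=;
  rewrite ?free_lift_hom ?(group_homV (free_lift_hom _)) !free_lift_gen //=.
all: by rewrite ?mulgK ?mulgVK ?mulKg ?mulVKg.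
Qed.

Definition act_word (l : seq lit) (w : freeGroup) : freeGroup := foldr act_lit w l.
Definition act (u w : freeGroup) : freeGroup := act_word (val u) w.

Lemma act_hom u : group_hom (act u).
Proof.
rewrite /act; elim: (val u) => [|x l IH] //= v w.
by rewrite IH act_lit_hom.
Qed.

Lemma act1 w : act 1 w = w.
Proof. by []. Qed.

Lemma act_word_lcons x l w : act_word (lcons x l) w = act_lit x (act_word l w).
Proof. by case: l => [|y l] //=; case: ifP => // /eqP->; rewrite act_litK. Qed.

Lemma actM u v w : act (u * v) w = act u (act v w).
Proof.
rewrite /act [val _]/(wmul _ _); elim: (val u) => [|x l IH] //=.
by rewrite act_word_lcons IH.
Qed.

Lemma act_fgen i w : act (fgen i) w = act_lit (i, false) w.
Proof. by []. Qed.

Lemma act_fixed u j : 0 < j -> act u (fgen j) = fgen j.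
Proof.
case: j => // j _; rewrite /act; elim: (val u) => [|x l IH] //=.
by rewrite IH /act_lit free_lift_gen; case: x => [[|[|i]] []].
Qed.

Definition st_action : gaction freeGroup freeGroup := GAction act_hom act1 actM.
Definition model : Type := sdprod st_action.

Definition model_a : model := (fgen 0, 1).
Definition model_b : model := (fgen 1, 1).
Definition model_c : model := (fgen 2, 1).
Definition model_s : model := (1, fgen 0).
Definition model_t : model := (1, fgen 1).

Lemma model_rels : rels model_a model_b model_c model_s model_t.
Proof.
by rewrite /rels !sdprod_conj !sdprodM /= !act_fgen !act1 /act_lit !free_lift_gen !mulg1.
Qed.

Section ModelEval.
Variables (G : groupType) (a b c s t : G).
Hypothesis abcst : rels a b c s t.

Definition eval_abc : freeGroup -> G := free_lift (nth 1 [:: a; b; c]).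
Definition eval_st : freeGroup -> G := free_lift (nth 1 [:: s; t]).

Lemma eval_abc_hom : group_hom eval_abc. Proof. exact: free_lift_hom. Qed.
Lemma eval_st_hom : group_hom eval_st. Proof. exact: free_lift_hom. Qed.

Lemma eval_abc_act_lit x w :
  eval_abc (act_lit x w) =
  lit_eval (nth 1 [:: s; t]) x * eval_abc w * (lit_eval (nth 1 [:: s; t]) x)^-1.
Proof.
set e := lit_eval _ x.
have hom_comp : group_hom (eval_abc \o act_lit x).
  by move=> u v; rewrite /= act_lit_hom eval_abc_hom.
have hom_conj : group_hom (fun w => e * eval_abc w * e^-1).
  by move=> u v; rewrite eval_abc_hom conjM.
apply: (free_hom_eq hom_comp hom_conj _ w) => j.
have [sa [sb [sc [ta [tb tc]]]]] := abcst.
move: (conjV_eq sb) (conjV_eq sc) (conjV_eq tb) (conjV_eq tc) => sb' sc' tb' tc'.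
have sa' : s^-1 * a * s^-1^-1 = a * b^-1.
  by apply: (@mulIg _ b); rewrite mulgVK -{1}sb' -conjM; apply: conjV_eq.
have ta' : t^-1 * a * t^-1^-1 = b^-1 * a.
  by apply: (@mulgI _ b); rewrite mulVKg -{1}tb' -conjM; apply: conjV_eq.
rewrite /= /act_lit !free_lift_gen /e /eval_abc.
case: x {e hom_comp hom_conj} => [[|[|i]] []]; case: j => [|[|[|j]]] /=;
  rewrite ?free_lift_hom ?(group_homV (free_lift_hom _)) !free_lift_gen /lit_eval /= ?nth_nil;
  by rewrite ?invg1 ?mulg1 ?mul1g ?mulgV ?sa ?sb ?sc ?ta ?tb ?tc ?sa' ?sb' ?sc' ?ta' ?tb' ?tc'.
Qed.

Lemma eval_abc_act u w : eval_abc (act u w) = eval_st u * eval_abc w * (eval_st u)^-1.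
Proof.
rewrite /act /eval_st /free_lift; elim: (val u) => [|x l IH] /=.
  by rewrite mul1g invg1 mulg1.
by rewrite eval_abc_act_lit IH invgM !mulgA.
Qed.

Definition model_eval (m : model) : G := eval_abc m.1 * eval_st m.2.

Lemma model_eval_hom : group_hom model_eval.
Proof. exact: (sdprod_lift_hom (A := st_action) eval_abc_hom eval_st_hom eval_abc_act). Qed.

End ModelEval.

Lemma presents_model_embedding (G : groupType) (a b c s t : G) :
  presents a b c s t -> exists f : G -> model,
    [/\ group_hom f, [/\ f b = model_b, f c = model_c, f s = model_s & f t = model_t]
      & cancel f (model_eval a b c s t)].
Proof.
case=> abcst univ.
have [f [[f_hom [fa [fb [fc [fs ft]]]]] _]] := univ _ _ _ _ _ _ model_rels.
have [f0 [_ unique]] := univ _ _ _ _ _ _ abcst.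
have id_f0 : forall x, id x = f0 x by apply: unique; do !split.
have eval_f_f0 : forall x, model_eval a b c s t (f x) = f0 x.
  apply: (unique (model_eval a b c s t \o f)); split.
    by move=> y z; rewrite /= f_hom (model_eval_hom abcst).
  rewrite /= fa fb fc fs ft /model_eval /= !(group_hom1 (eval_abc_hom _ _ _)).
  by rewrite !(group_hom1 (eval_st_hom _ _)) /eval_abc /eval_st !free_lift_gen !mulg1 !mul1g.
by exists f; split => // x; rewrite eval_f_f0 -id_f0.
Qed.

Section Presented.
Variables (G : groupType) (a b c s t : G).
Hypothesis pres : presents a b c s t.

Lemma presented_normal_form x : exists w u,
  [/\ x = eval_abc a b c w * eval_st s t u,
      commute x b -> commute w (fgen 1), commute x c -> commute w (fgen 2),
      commute x s -> commute u (fgen 0) & commute x t -> commute u (fgen 1)].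
Proof.
have [f [f_hom [fb fc fs ft] fK]] := presents_model_embedding pres.
have f_commute y m : f y = m -> commute x y -> commute (f x) m.
  by move=> <- xy; rewrite /commute -!f_hom xy.
exists (f x).1, (f x).2; split.
- by rewrite -{1}(fK x).
- by move/(f_commute _ _ fb)/commute_sdprod_fixed; apply=> u; apply: act_fixed.
- by move/(f_commute _ _ fc)/commute_sdprod_fixed; apply=> u; apply: act_fixed.
- by move/(f_commute _ _ fs)/commute_sdprod_inr.
- by move/(f_commute _ _ ft)/commute_sdprod_inr.
Qed.

Lemma zpow_b_inj : injective (zpow b).
Proof.
have [f [f_hom [fb _ _ _] _]] := presents_model_embedding pres.
move=> i j /(congr1 f); rewrite !(group_homZ f_hom) fb.
by rewrite -!(group_homZ (sdprod_inl_hom _)) => /(congr1 fst); apply: zpow_flit_inj.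
Qed.

Lemma centralises_bst_zpow x : centralises x [:: b; s; t] -> exists i, x = zpow b i.
Proof.
have [w [u [-> xb _ xs xt]]] := presented_normal_form x.
case/centralises3 => /xb/commute_flit[i w_i] /xs us /xt ut.
exists i; rewrite w_i (commute_fgen2 _ us ut) // (group_hom1 (eval_st_hom _ _)) mulg1.
by rewrite (group_homZ (eval_abc_hom _ _ _)) /eval_abc free_lift_gen.
Qed.

Lemma commute_bc_eval_st x : commute x b -> commute x c -> exists u,
  [/\ x = eval_st s t u, commute x s -> commute u (fgen 0)
    & commute x t -> commute u (fgen 1)].
Proof.
have [w [u [def_x xb xc xs xt]]] := presented_normal_form x.
move=> /xb wb /xc wc; exists u; split=> //.
by rewrite def_x (commute_fgen2 _ wb wc) // (group_hom1 (eval_abc_hom _ _ _)) mul1g.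
Qed.

Lemma eval_st_zpow j i : eval_st s t (zpow (fgen j) i) = zpow (nth 1 [:: s; t] j) i.
Proof. by rewrite (group_homZ (eval_st_hom _ _)) /eval_st free_lift_gen. Qed.

Lemma centralises_sbc_zpow x : centralises x [:: s; b; c] -> exists i, x = zpow s i.
Proof.
case/centralises3 => xs xb xc.
have [u [def_x /(_ xs)/commute_flit[i u_i] _]] := commute_bc_eval_st xb xc.
by exists i; rewrite def_x u_i eval_st_zpow.
Qed.

Lemma centralises_tbc_zpow x : centralises x [:: t; b; c] -> exists i, x = zpow t i.
Proof.
case/centralises3 => xt xb xc.
have [u [def_x _ /(_ xt)/commute_flit[i u_i]]] := commute_bc_eval_st xb xc.
by exists i; rewrite def_x u_i eval_st_zpow.
Qed.

Lemma commute_bc_gen x : commute x b -> commute x c -> gen (fun y => y = s \/ y = t) x.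
Proof.
move=> xb xc; have [u [-> _ _]] := commute_bc_eval_st xb xc.
move=> P P_sub st_P; apply: free_lift_subgroup => // -[|[|j]] /=.
- by apply: st_P; left.
- by apply: st_P; right.
- by rewrite nth_nil; case: P_sub.
Qed.

Lemma presented_commute : [/\ commute b s, commute b t, commute c s & commute c t].
Proof.
have [[_ [sb [sc [_ [tb tc]]]]] _] := pres.
by split; apply/commute_sym/conj_fix_commute.
Qed.

Lemma gen_b_centraliser x : gen (fun y => y = b) x <-> centralises x [:: b; s; t].
Proof.
have [bs bt _ _] := presented_commute.
by apply: gen_cyclic_centraliser centralises_bst_zpow x; apply/centralises3.
Qed.

Lemma gen_s_centraliser x : gen (fun y => y = s) x <-> centralises x [:: s; b; c].
Proof.
have [bs _ cs _] := presented_commute.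
apply: gen_cyclic_centraliser centralises_sbc_zpow x.
by apply/centralises3; split; apply/commute_sym.
Qed.

Lemma gen_t_centraliser x : gen (fun y => y = t) x <-> centralises x [:: t; b; c].
Proof.
have [_ bt _ ct] := presented_commute.
apply: gen_cyclic_centraliser centralises_tbc_zpow x.
by apply/centralises3; split; apply/commute_sym.
Qed.

Lemma gen_st_centraliser x : gen (fun y => y = s \/ y = t) x <-> centralises x [:: b; c].
Proof.
have [bs bt cs ct] := presented_commute.
split=> [|cx]; last by apply: commute_bc_gen; apply: cx; rewrite !inE eqxx ?orbT.
by apply: gen_centralises => y [] -> g; rewrite !inE => /orP[]/eqP->; apply: commute_sym.
Qed.

Lemma zpow_pair_centraliser x y : (exists i, x = zpow s i /\ y = zpow t i) <->
  [/\ centralises x [:: s; b; c], centralises y [:: t; b; c]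
    & a^-1 * (x * a * x^-1) = y * a * y^-1 * a^-1].
Proof.
have [[sa [sb [_ [ta [tb _]]]]] _] := pres.
have conj_s := zpow_conj_mulr (conj_fix_commute sb) sa.
have conj_t := zpow_conj_mull (conj_fix_commute tb) ta.
split=> [[i [-> ->]] | [/centralises_sbc_zpow[i ->] /centralises_tbc_zpow[j ->]]].
  rewrite conj_s conj_t mulKg mulgK; split=> //.
    by apply/gen_s_centraliser; apply: gen_zpow.
  by apply/gen_t_centraliser; apply: gen_zpow.
by rewrite conj_s conj_t mulKg mulgK => /zpow_b_inj->; exists j.
Qed.

End Presented.

Section Definability.
Variable G : groupType.
Implicit Types (g : G) (gs : seq G) (E : system G) (phi : nat -> G).

Definition commute_eq (k : nat) g : equation G :=
  [:: Var G k false; Const g; Var G k true; Const g^-1].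

Lemma eval_commute_eq phi k g : eval_word phi (commute_eq k g) = 1 <-> commute (phi k) g.
Proof.
rewrite /eval_word /= mulg1 !mulgA; split=> [/divg1_eq | ->]; last by rewrite mulgK mulgV.
by move/(congr1 (fun z => z * phi k)); rewrite mulgVK.
Qed.

Lemma is_solution_cons e E phi :
  is_solution (e :: E) phi <-> eval_word phi e = 1 /\ is_solution E phi.
Proof.
split=> [sol | [sol_e sol_E] [|k] //]; last exact: sol_E.
by split=> [|k]; [apply: (sol 0) | apply: (sol k.+1)].
Qed.

Lemma is_solution_cat E1 E2 phi :
  is_solution (E1 ++ E2) phi <-> is_solution E1 phi /\ is_solution E2 phi.
Proof.
elim: E1 => [|e E1 IH] /=; first by split=> // -[].
rewrite !is_solution_cons IH; tauto.
Qed.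

Definition centraliser_system (k : nat) gs : system G := map (commute_eq k) gs.

Lemma is_solution_centraliser k gs phi :
  is_solution (centraliser_system k gs) phi <-> centralises (phi k) gs.
Proof.
elim: gs => [|g gs IH] /=; first by split=> // _ g.
rewrite is_solution_cons IH eval_commute_eq; split=> [[pg pgs] h | cx].
  by rewrite inE => /predU1P[->|/pgs].
by split=> [|h gs_h]; apply: cx; rewrite inE ?eqxx ?gs_h ?orbT.
Qed.

Lemma eq_definable1_system (D : G -> Prop) E :
  (forall phi, is_solution E phi <-> D (phi 0)) -> eq_definable1 D.
Proof.
move=> solE; exists E, (fun=> 0) => v; split=> [Dv | [phi [sol phi_v]]].
  by exists (fun=> v ord0); split=> [|k]; [apply/solE | rewrite (ord1 k)].
by rewrite -phi_v; apply/solE.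
Qed.

Lemma eq_definable2_system (D : G -> G -> Prop) E :
  (forall phi, is_solution E phi <-> D (phi 0%N) (phi 1%N)) -> eq_definable2 D.
Proof.
move=> solE; exists E, val => v; split=> [Dv | [phi [sol phi_v]]].
  exists (fun n => if n == 0 then v ord0 else v ord_max); split=> [|k]; first exact/solE.
  by case: k => -[|[|k]] lt_k //=; congr v; apply: val_inj.
by rewrite -(phi_v ord0) -(phi_v ord_max); apply/solE.
Qed.

Lemma centraliser_definable gs (D : G -> Prop) :
  (forall x, D x <-> centralises x gs) -> eq_definable1 D.
Proof.
move=> DE; apply: (eq_definable1_system (E := centraliser_system 0 gs)) => phi.
by rewrite is_solution_centraliser DE.
Qed.

Definition conj_pair_eq (a : G) : equation G :=
  [:: Const a^-1; Var G 0 false; Const a; Var G 0 true;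
      Const a; Var G 1 false; Const a^-1; Var G 1 true].

Lemma eval_conj_pair_eq phi a : eval_word phi (conj_pair_eq a) = 1 <->
  a^-1 * (phi 0 * a * (phi 0)^-1) = phi 1%N * a * (phi 1%N)^-1 * a^-1.
Proof.
have -> : eval_word phi (conj_pair_eq a) =
    a^-1 * (phi 0 * a * (phi 0)^-1) / (phi 1%N * a * (phi 1%N)^-1 * a^-1).
  by rewrite /eval_word /= mulg1 !invgM !invgK !mulgA.
by split=> [/divg1_eq | ->]; last exact: mulgV.
Qed.

End Definability.

Theorem lemma6p4 (G : groupType) (a b c s t : G) :
  presents a b c s t ->
  [/\ eq_definable1 (gen (fun x => x = b)),
      eq_definable1 (gen (fun x => x = s)),
      eq_definable1 (gen (fun x => x = t)),
      eq_definable2 (fun x y => exists i : int, x = zpow s i /\ y = zpow t i)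
    & eq_definable1 (gen (fun x => x = s \/ x = t))].
Proof.
move=> pres; split.
- exact: centraliser_definable (gen_b_centraliser pres).
- exact: centraliser_definable (gen_s_centraliser pres).
- exact: centraliser_definable (gen_t_centraliser pres).
- apply: (eq_definable2_system (E := centraliser_system 0 [:: s; b; c] ++
    centraliser_system 1 [:: t; b; c] ++ [:: conj_pair_eq a])) => phi.
  rewrite !is_solution_cat !is_solution_centraliser is_solution_cons.
  rewrite eval_conj_pair_eq (zpow_pair_centraliser pres).
  by split=> [[? [? []]] | []].
- exact: centraliser_definable (gen_st_centraliser pres).
Qed.
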